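(* Let $\lambda_{\max}>1$ and let $F:[0,\lambda_{\max}]\to\mathbb{R}_+$ be continuously differentiable with $F(0)=0$, such that $F(x)<F^\star$ for all $x\in[0,1)$ and $F'(1)>0$. If $F$ is concave-like, then the Dirac measure at $1$ (i.e. $\alpha(\{1\})=1$) is the unique optimal solution of the optimization problem defining $F^\star$. Otherwise, there exist $x_1^\star\in(1,\lambda_{\max}]$, $x_2^\star\in[0,1)$ and $p^\star\in(0,1)$ such that the measure $\alpha$ with $\alpha(\{x_1^\star\})=p^\star$ and $\alpha(\{x_2^\star\})=1-p^\star$ is an optimal solution of that problem.
   Context: $F^\star=\sup\{\mathbb{E}_\alpha[F(X)]:\alpha$ a probability measure on $[0,\lambda_{\max}]$, $X\sim\alpha$, $\mathbb{E}_\alpha[X]\le1\}$. $F$ is called concave-like if for all $x_1,x_2\in[0,\lambda_{\max}]\setminus\{1\}$ and $p\in(0,1)$ with $px_1+(1-p)x_2=1$, we have $F(1)>pF(x_1)+(1-p)F(x_2)$. *)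

From HB Require Import structures.
From mathcomp Require Import all_boot all_order all_algebra.
From mathcomp Require Import all_classical all_reals all_analysis.
Set Implicit Arguments. Unset Strict Implicit. Unset Printing Implicit Defensive.
Import Order.TTheory GRing.Theory Num.Theory.
Import numFieldNormedType.Exports.
Local Open Scope classical_set_scope.
Local Open Scope ring_scope.

(* Probability measures on [0, lmax] are modelled as probability measures on
   the Borel/Lebesgue-measurable real line that give full mass to [0, lmax]. *)

Section Defs.
Context {R : realType}.

Definition dom (lmax : R) : set R := `[0, lmax]%classic.

Definition feasible (lmax : R) (mu : probability R R) : Prop :=
  mu (dom lmax) = 1%E /\ (\int[mu]_(x in dom lmax) (x%:E) <= 1)%E.

Definition objective (lmax : R) (F : R -> R) (mu : probability R R) : \bar R :=
  \int[mu]_(x in dom lmax) (F x)%:E.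

Definition Fstar (lmax : R) (F : R -> R) : \bar R :=
  ereal_sup [set v | exists mu : probability R R,
                       feasible lmax mu /\ objective lmax F mu = v].

Definition optimal (lmax : R) (F : R -> R) (mu : probability R R) : Prop :=
  feasible lmax mu /\ objective lmax F mu = Fstar lmax F.

Definition concave_like (lmax : R) (F : R -> R) : Prop :=
  forall x1 x2 p : R,
    x1 \in `[0, lmax] -> x2 \in `[0, lmax] -> x1 != 1 -> x2 != 1 ->
    0 < p < 1 -> p * x1 + (1 - p) * x2 = 1 ->
    p * F x1 + (1 - p) * F x2 < F 1.

Definition C1_on (a b : R) (F : R -> R) : Prop :=
  {within `[a, b], continuous F} /\
  exists G : R -> R, {within `[a, b], continuous G} /\
    forall x, x \in `]a, b[ -> is_derive x 1 F (G x).

End Defs.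

From HB Require Import structures.
From mathcomp Require Import all_boot all_order all_algebra.
From mathcomp Require Import all_classical all_reals all_analysis.
From mathcomp Require Import measurable_realfun ring lra.
Import Order.TTheory GRing.Theory Num.Theory.
Import numFieldNormedType.Exports.
Local Open Scope classical_set_scope.
Local Open Scope ring_scope.
Set Implicit Arguments. Unset Strict Implicit. Unset Printing Implicit Defensive.

(* Weak duality: if F x <= c + k x on [0, lmax] with k >= 0, then every feasible
   measure has objective at most c + k, because its mean is at most 1.

   If F is concave-like, the tangent line at 1 lies above F, so F^* = F 1 and
   the Dirac mass at 1 is optimal.  An optimal measure must have mean 1 and be
   carried by the points where F touches the tangent; concave-likeness forbids
   touching points on both sides of 1, so the measure is the Dirac mass at 1.

   Otherwise let v = F^*.  If F 1 = v, a chord witnessing the failure of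
   concave-likeness is itself an optimal two-point measure.  If F 1 < v, the
   line through (1, v) with slope s = sup_{y > 1} (F y - v) / (y - 1) lies above
   F.  By compactness it touches F at some y > 1, and also at some x < 1, since
   otherwise a slightly steeper line would give F^* < v.  The two-point measure
   on {x, y} with mean 1 then has objective v. *)

Section two_point.
Context d (T : measurableType d) (R : realType) (p : {i01 R}) (x y : T).

Definition two_point : set T -> \bar R :=
  measure_add (mscale (p%:num)%:nng \d_x) (mscale (1 - p%:num)%:nng \d_y).

Lemma two_pointE A :
  two_point A = ((p%:num)%:E * \d_x A + (1 - p%:num)%:E * \d_y A)%E.
Proof. exact: measure_addE. Qed.

Let two_point0 : two_point set0 = 0%E.
Proof. exact: measure0. Qed.

Let two_point_ge0 A : (0 <= two_point A)%E.
Proof. exact: measure_ge0. Qed.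

Let two_point_sigma_additive : semi_sigma_additive two_point.
Proof. exact: measure_semi_sigma_additive. Qed.

HB.instance Definition _ := isMeasure.Build _ _ _ two_point
  two_point0 two_point_ge0 two_point_sigma_additive.

Let two_pointT : two_point setT = 1%E.
Proof. by rewrite two_pointE !diracT !mule1 -EFinD subrKC. Qed.

HB.instance Definition _ := Measure_isProbability.Build _ _ _ two_point two_pointT.

Lemma two_point_set1l : x != y -> two_point [set x] = (p%:num)%:E.
Proof.
move=> xy; rewrite two_pointE !diracE [x \in _]mem_set// memNset/=.
  by rewrite mule1 mule0 adde0.
by move/esym/eqP; rewrite (negPf xy).
Qed.

Lemma two_point_set1r : x != y -> two_point [set y] = (1 - p%:num)%:E.
Proof.
move=> xy; rewrite two_pointE !diracE [y \in _]mem_set// memNset/=.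
  by rewrite mule0 mule1 add0e.
by move/eqP; rewrite (negPf xy).
Qed.

Lemma integral_two_point (D : set T) (f : T -> \bar R) : measurable D ->
  measurable_fun D f -> (forall z, D z -> 0 <= f z)%E -> D x -> D y ->
  (\int[two_point]_(z in D) f z = (p%:num)%:E * f x + (1 - p%:num)%:E * f y)%E.
Proof.
move=> mD mf f0 Dx Dy.
rewrite (@eq_measure_integral _ _ _ _
  (measure_add (mscale (p%:num)%:nng \d_x) (mscale (1 - p%:num)%:nng \d_y))) //.
rewrite ge0_integral_measure_add // !ge0_integral_mscale // !integral_dirac //.
by rewrite !diracE !mem_set //= !mul1e.
Qed.

End two_point.

Section derivative_quotient.
Context {R : realType} (f : R -> R) (c d : R).
Hypothesis fd : is_derive c 1 f d.

Lemma is_derive1_quotient : (fun h => (f (h + c) - f c) / h) @ 0^' --> d.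
Proof.
case: fd => /cvg_ex[/= l fl] dE; rewrite -dE /derive /= (cvg_lim _ fl) //.
apply: cvg_trans fl; apply: near_eq_cvg; near=> h.
by rewrite /= [h%:A]mulr1 mulrC.
Unshelve. all: by end_near. Qed.

Lemma is_derive1_le_right (M : R) :
  (\forall h \near 0^'+, (f (h + c) - f c) / h <= M) -> d <= M.
Proof.
move=> fM; apply: (ler_cvg_to _ _ fM); last exact: cvg_cst.
exact: cvg_dnbhs_at_right is_derive1_quotient.
Qed.

Lemma is_derive1_ge_left (M : R) :
  (\forall h \near 0^'-, M <= (f (h + c) - f c) / h) -> M <= d.
Proof.
move=> Mf; apply: (ler_cvg_to _ _ Mf); first exact: cvg_cst.
exact: cvg_dnbhs_at_left is_derive1_quotient.
Qed.

End derivative_quotient.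

Section unit_mean_weight.
Context {R : realFieldType} (a b : R).

Definition unit_mean_weight : R := (1 - a) / (b - a).
Local Notation p := unit_mean_weight.

Lemma unit_mean_weight_itv : a < 1 -> 1 < b -> 0 < p < 1.
Proof.
move=> a_lt1 b_gt1; have ba_gt0 : 0 < b - a by lra.
apply/andP; split; first by apply: divr_gt0; lra.
by rewrite ltr_pdivrMr // mul1r; lra.
Qed.

Lemma unit_mean_weightE : a < 1 -> 1 < b -> p * b + (1 - p) * a = 1.
Proof. by move=> a_lt1 b_gt1; rewrite /unit_mean_weight; field; lra. Qed.

Lemma unit_mean_weight_slopes (fa fb f1 : R) : a < 1 -> 1 < b ->
  p * fb + (1 - p) * fa - f1 =
  (1 - a) * (b - 1) / (b - a) * ((fb - f1) / (b - 1) - (f1 - fa) / (1 - a)).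
Proof. by move=> a_lt1 b_gt1; rewrite /unit_mean_weight; field; lra. Qed.

End unit_mean_weight.

Section ae_integral.
Context d (T : measurableType d) (R : realType).

Lemma ae_eq0_of_integral_eq0 (mu : {measure set T -> \bar R}) (D : set T)
    (f : T -> R) : measurable D -> measurable_fun D f ->
  (\forall x \ae mu, D x -> 0 <= f x) -> (\int[mu]_(x in D) (f x)%:E = 0)%E ->
  \forall x \ae mu, D x -> f x = 0.
Proof.
move=> mD mf f_ge0 If0.
have mfE : measurable_fun D (EFin \o f) by exact/measurable_EFinP.
have : ae_eq mu D (EFin \o f) (cst 0%E).
  apply/(ae_eq_integral_abs mu mD mfE); rewrite -If0.
  apply: ae_eq_integral => //; first exact: measurableT_comp.
  by apply: filterS f_ge0 => x fx Dx; rewrite gee0_abs // lee_fin fx.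
by apply: filterS => x fx0 Dx; case: (fx0 Dx).
Qed.

Lemma probability_set1_of_ae (P : probability T R) (D : set T) (c : T) :
  measurable D -> measurable [set c] -> P D = 1%E ->
  (\forall x \ae P, D x -> x = c) -> P [set c] = 1%E.
Proof.
move=> mD mc PD [N [mN PN0 DcN]].
apply/eqP; rewrite eq_le probability_le1 //= -PD.
have DcN' : D `<=` [set c] `|` N.
  move=> x Dx; have [->|xc] := pselect (x = c); [by left|right].
  by apply: DcN => /(_ Dx).
apply: (le_trans (le_measure _ _ _ DcN')); rewrite ?inE //.
  exact: measurableU.
by rewrite (le_trans (measureU2 _ mc mN)) // [X in (_ + X)%E](_ : _ = 0%E) ?adde0.
Qed.

End ae_integral.

Section interval_expectation.
Context {R : realType} (mu : probability R R) (a b : R).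
Local Notation I := `[a, b]%classic.

Let mI : measurable I. Proof. exact: measurable_itv. Qed.

Lemma integrable_id_itv : mu.-integrable I (EFin \o id).
Proof.
apply: measurable_bounded_integrable => //.
- by rewrite (le_lt_trans (probability_le1 _ mI)) ?ltry.
- exists (`|a| + `|b|); split; first exact: num_real.
  move=> M aM x /=; rewrite in_itv/= => /andP[ax xb]; apply/ltW/(le_lt_trans _ aM).
  have := ler_norm (- a); have := ler_norm b.
  have := normr_ge0 a; have := normr_ge0 b.
  by rewrite normrN ler_norml => ? ? ? ?; apply/andP; split; lra.
Qed.

Lemma integral_affine (c k : R) : mu I = 1%E ->
  (\int[mu]_(x in I) (c + k * x)%:E = c%:E + k%:E * \int[mu]_(x in I) x%:E)%E.
Proof.
move=> muI.
have int_c : mu.-integrable I (EFin \o cst c).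
  exact: finite_measure_integrable_cst.
rewrite (eq_integral (fun x => (EFin \o cst c) x + k%:E * (EFin \o id) x))%E;
  last by move=> x _; rewrite /= EFinD EFinM.
rewrite integralD //; last exact: integrableZl integrable_id_itv.
rewrite integralZl // ?integrable_id_itv //; congr (_ + _)%E.
rewrite (eq_integral (cst c%:E)) // integral_cst //.
by rewrite [X in (_ * X)%E](_ : _ = 1%E) ?mule1.
Qed.

Lemma probability_set1_of_mean (c : R) : mu I = 1%E ->
  (\int[mu]_(x in I) x%:E = c%:E)%E ->
  (\forall x \ae mu, I x -> x <= c) \/ (\forall x \ae mu, I x -> c <= x) ->
  mu [set c] = 1%E.
Proof.
move=> muI mean one_sided.
have [s s_neq0 s_ge0] :
    exists2 s : R, s != 0 & \forall x \ae mu, I x -> 0 <= s * (x - c).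
  case: one_sided => side; [exists (-1)|exists 1]; rewrite ?oppr_eq0 ?oner_neq0 //.
    by apply: filterS side => x x_le Ix; rewrite mulN1r oppr_ge0 subr_le0 x_le.
  by apply: filterS side => x x_ge Ix; rewrite mul1r subr_ge0 x_ge.
have int0 : (\int[mu]_(x in I) (s * (x - c))%:E = 0)%E.
  rewrite (eq_integral (fun x => (- (s * c) + s * x)%:E)).
    by rewrite integral_affine // mean -EFinM -EFinD addNr.
  by move=> x _; congr EFin; ring.
have m_s : measurable_fun I (fun x => s * (x - c)).
  by apply: measurable_funM => //; exact: measurable_funB.
apply: (probability_set1_of_ae mI) => //.
apply: filterS (ae_eq0_of_integral_eq0 mI m_s s_ge0 int0) => x sx0 Ix.
by have /eqP := sx0 Ix; rewrite mulf_eq0 (negPf s_neq0) subr_eq0 => /eqP.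
Qed.

End interval_expectation.


Lemma measurable_dom {R : realType} (lmax : R) : measurable (dom lmax).
Proof. exact: measurable_itv. Qed.

#[local] Hint Extern 0 (measurable (dom _)) => exact: measurable_dom : core.

Lemma domP {R : realType} (lmax x : R) : dom lmax x <-> 0 <= x <= lmax.
Proof. by rewrite /dom /= in_itv. Qed.

Section optimization_problem.
Context {R : realType} (lmax : R) (F : R -> R).
Implicit Types (mu : probability R R) (v : \bar R).

Lemma objective_le_Fstar mu : feasible lmax mu ->
  (objective lmax F mu <= Fstar lmax F)%E.
Proof. by move=> mu_feas; apply: ereal_sup_ubound; exists mu. Qed.

Lemma Fstar_le v :
  (forall mu, feasible lmax mu -> objective lmax F mu <= v)%E ->
  (Fstar lmax F <= v)%E.
Proof. by move=> objv; apply: ge_ereal_sup => _ [mu [mu_feas <-]]; exact: objv. Qed.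

Lemma feasible_optimal mu : feasible lmax mu ->
  (Fstar lmax F <= objective lmax F mu)%E -> optimal lmax F mu.
Proof.
move=> mu_feas Fstar_le_obj; split => //.
by apply/le_anti; rewrite Fstar_le_obj objective_le_Fstar.
Qed.

Lemma feasible_mean mu : feasible lmax mu ->
  exists2 m : R, (\int[mu]_(x in dom lmax) x%:E = m%:E)%E & m <= 1.
Proof.
move=> [_ mean_le1].
have mean_ge0 : (0 <= \int[mu]_(x in dom lmax) x%:E)%E.
  by apply: integral_ge0 => x /domP/andP[x_ge0 _]; rewrite lee_fin.
have mean_fin : (\int[mu]_(x in dom lmax) x%:E)%E \is a fin_num.
  by rewrite ge0_fin_numE // (le_lt_trans mean_le1) ?ltry.
exists (fine (\int[mu]_(x in dom lmax) x%:E)%E); first by rewrite fineK.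
by rewrite -lee_fin fineK.
Qed.

Lemma feasible_dirac x : dom lmax x -> x <= 1 -> feasible lmax \d_x.
Proof.
move=> Dx x_le1; split; first by rewrite /= diracE mem_set.
by rewrite integral_dirac ?diracE ?(mem_set Dx) ?mul1e ?lee_fin.
Qed.

Lemma feasible_two_point (p : {i01 R}) x y : dom lmax x -> dom lmax y ->
  p%:num * x + (1 - p%:num) * y <= 1 -> feasible lmax (two_point p x y).
Proof.
move=> Dx Dy mean_le1; split.
  by rewrite /= two_pointE !diracE !mem_set // !mule1 -EFinD subrKC.
rewrite integral_two_point ?lee_fin -?EFinM -?EFinD //.
by move=> z /domP/andP[z_ge0 _]; rewrite lee_fin.
Qed.

Section continuous_objective.
Hypothesis F_cont : {within `[0, lmax], continuous F}.
Hypothesis F_ge0 : forall x, x \in `[0, lmax] -> 0 <= F x.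

Lemma measurable_F : measurable_fun (dom lmax) F.
Proof. exact: subspace_continuous_measurable_fun (measurable_dom lmax) F_cont. Qed.

Lemma measurable_objective_integrand :
  measurable_fun (dom lmax) (fun x => (F x)%:E).
Proof. by apply/measurable_EFinP; exact: measurable_F. Qed.

Lemma objective_dirac x : dom lmax x -> objective lmax F \d_x = (F x)%:E.
Proof.
move=> Dx; rewrite /objective integral_dirac ?diracE ?(mem_set Dx) ?mul1e //.
exact: measurable_objective_integrand.
Qed.

Lemma objective_two_point (p : {i01 R}) x y : dom lmax x -> dom lmax y ->
  objective lmax F (two_point p x y) = (p%:num * F x + (1 - p%:num) * F y)%:E.
Proof.
move=> Dx Dy; rewrite /objective integral_two_point -?EFinM -?EFinD //.
exact: measurable_objective_integrand.
Qed.

Lemma objective_add_gap mu (m c k : R) : mu (dom lmax) = 1%E ->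
  (\int[mu]_(x in dom lmax) x%:E = m%:E)%E ->
  (forall x, dom lmax x -> F x <= c + k * x) ->
  (objective lmax F mu + \int[mu]_(x in dom lmax) (c + k * x - F x)%:E =
   (c + k * m)%:E)%E.
Proof.
move=> muD mean F_le; rewrite /objective -ge0_integralD //.
- rewrite (eq_integral (fun x => (c + k * x)%:E)).
    by rewrite integral_affine // mean -EFinM -EFinD.
  by move=> x _; rewrite -EFinD addrC subrK.
- exact: measurable_objective_integrand.
- by move=> x Dx; rewrite lee_fin subr_ge0 F_le.
- apply/measurable_EFinP/measurable_funB; last exact: measurable_F.
  by apply: measurable_funD => //; apply: measurable_funM.
Qed.

Lemma objective_le_line mu (c k : R) : feasible lmax mu -> 0 <= k ->
  (forall x, dom lmax x -> F x <= c + k * x) ->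
  (objective lmax F mu <= (c + k)%:E)%E.
Proof.
move=> mu_feas k_ge0 F_le; have [m mean m_le1] := feasible_mean mu_feas.
have gap_ge0 : (0 <= \int[mu]_(x in dom lmax) (c + k * x - F x)%:E)%E.
  by apply: integral_ge0 => x Dx; rewrite lee_fin subr_ge0 F_le.
apply: (le_trans (leeDl _ gap_ge0)).
rewrite (objective_add_gap mu_feas.1 mean F_le) lee_fin lerD2l.
by rewrite -[leRHS]mulr1 ler_wpM2l.
Qed.

Lemma Fstar_le_line (c k : R) : 0 <= k ->
  (forall x, dom lmax x -> F x <= c + k * x) -> (Fstar lmax F <= (c + k)%:E)%E.
Proof. by move=> k_ge0 F_le; apply: Fstar_le => mu /objective_le_line; apply. Qed.

Hypothesis lmax_ge0 : 0 <= lmax.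

Lemma continuous_gap (a b c k : R) : 0 <= a -> b <= lmax ->
  {within `[a, b], continuous (fun z => c + k * z - F z)}.
Proof.
move=> a_ge0 b_le; have sub : [set` `[a, b]] `<=` [set` `[0, lmax]].
  by move=> z /=; rewrite !in_itv /= => /andP[az zb]; apply/andP; split; lra.
have -> : (fun z => c + k * z - F z) = cst c + cst k \* id - F by [].
have F_cont_ab := continuous_subspaceW sub F_cont.
move=> x; apply: continuousB; last exact: F_cont_ab.
apply: continuousD; first exact: cst_continuous.
apply: continuousM; first exact: cst_continuous.
exact: (continuous_subspaceT (f := id) (fun z => @cvg_id _ _)).
Qed.

Lemma Fstar_lt_line (c k : R) : 0 <= k ->
  (forall x, dom lmax x -> F x < c + k * x) -> (Fstar lmax F < (c + k)%:E)%E.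
Proof.
move=> k_ge0 F_lt.
have [z Dz gap_min] :=
  EVT_min lmax_ge0 (continuous_gap (c := c) (k := k) (lexx 0) (lexx lmax)).
set e := c + k * z - F z in gap_min.
have e_gt0 : 0 < e by rewrite subr_gt0 F_lt.
apply: (@le_lt_trans _ _ (c - e + k)%:E); last by rewrite lte_fin; lra.
by apply: Fstar_le_line => // x Dx; have := gap_min x Dx; lra.
Qed.

Lemma Fstar_fin_num : Fstar lmax F \is a fin_num.
Proof.
have D0 : dom lmax 0 by apply/domP; rewrite lexx.
have [z _ F_max] := EVT_max lmax_ge0 F_cont.
rewrite fin_numElt (lt_le_trans _ (objective_le_Fstar (feasible_dirac D0 ler01))).
  apply: (@le_lt_trans _ _ (F z + 0)%:E); last exact: ltry.
  by apply: Fstar_le_line => // x Dx; rewrite mul0r addr0 F_max.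
by rewrite objective_dirac // ltNyr.
Qed.

End continuous_objective.
End optimization_problem.

Section concave_like.
Context {R : realType} (lmax : R) (F : R -> R).
Hypothesis F_cl : concave_like lmax F.

Lemma concave_like_slope a b : dom lmax a -> dom lmax b -> a < 1 -> 1 < b ->
  (F b - F 1) / (b - 1) < (F 1 - F a) / (1 - a).
Proof.
move=> Da Db a_lt1 b_gt1.
have q_gt0 : 0 < (1 - a) * (b - 1) / (b - a) by apply: divr_gt0; nra.
rewrite -subr_lt0 -(pmulr_rlt0 _ q_gt0) -unit_mean_weight_slopes // subr_lt0.
have p01 := unit_mean_weight_itv a_lt1 b_gt1.
apply: F_cl Db Da _ _ p01 (unit_mean_weightE a_lt1 b_gt1).
- by rewrite gt_eqF.
- by rewrite lt_eqF.
Qed.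

Lemma concave_like_no_chord a b k : dom lmax a -> dom lmax b -> a < 1 -> 1 < b ->
  F a = F 1 + k * (a - 1) -> F b = F 1 + k * (b - 1) -> False.
Proof.
move=> Da Db a_lt1 b_gt1 Fa Fb; have := concave_like_slope Da Db a_lt1 b_gt1.
rewrite Fa Fb (_ : (F 1 + k * (b - 1) - F 1) / (b - 1) = k); last by field; lra.
by rewrite (_ : (F 1 - (F 1 + k * (a - 1))) / (1 - a) = k) ?ltxx //; field; lra.
Qed.

Lemma concave_like_contact_one_sided (mu : {measure set R -> \bar R}) k :
  (\forall x \ae mu, dom lmax x -> F x = F 1 + k * (x - 1)) ->
  (\forall x \ae mu, dom lmax x -> x <= 1) \/
  (\forall x \ae mu, dom lmax x -> 1 <= x).
Proof.
move=> contact.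
have [[a [Da a_lt1 Fa]]|no_left] :=
  pselect (exists a, [/\ dom lmax a, a < 1 & F a = F 1 + k * (a - 1)]).
- left; apply: filterS contact => x Fx Dx; rewrite leNgt; apply/negP => x_gt1.
  exact: concave_like_no_chord Da Dx a_lt1 x_gt1 Fa (Fx Dx).
- right; apply: filterS contact => x Fx Dx; rewrite leNgt; apply/negP => x_lt1.
  by apply: no_left; exists x; split => //; exact: Fx.
Qed.

Variable d : R.
Hypothesis F_deriv1 : is_derive (1 : R) 1 F d.
Hypothesis lmax_gt1 : 1 < lmax.

Lemma concave_like_tangent x : dom lmax x -> F x <= F 1 + d * (x - 1).
Proof.
move=> /[dup] Dx /domP/andP[x_ge0 x_le].
have [x_lt1|x_gt1|->] := ltgtP x 1; last by rewrite subrr mulr0 addr0.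
- have : d <= (F 1 - F x) / (1 - x).
    apply: (is_derive1_le_right F_deriv1); near=> h.
    have h_gt0 : 0 < h by near: h; exact: nbhs_right_gt.
    have h_lt : h < lmax - 1.
      by near: h; apply: nbhs_right_lt; rewrite subr_gt0.
    have Dh : dom lmax (h + 1) by apply/domP/andP; split; lra.
    by rewrite -[X in _ / X](addrK 1); apply/ltW/concave_like_slope => //; lra.
  by rewrite ler_pdivlMr ?subr_gt0 //; lra.
- have : (F x - F 1) / (x - 1) <= d.
    apply: (is_derive1_ge_left F_deriv1); near=> h.
    have h_lt0 : h < 0 by near: h; exact: nbhs_left_lt.
    have h_gt : -1 < h by near: h; apply: nbhs_left_gt; rewrite ltrN10.
    have Dh : dom lmax (h + 1) by apply/domP/andP; split; lra.
    rewrite (_ : (F (h + 1) - F 1) / h = (F 1 - F (h + 1)) / (1 - (h + 1))).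
      by apply/ltW/concave_like_slope => //; lra.
    by field; lra.
  by rewrite ler_pdivrMr ?subr_gt0 //; lra.
Unshelve. all: by end_near. Qed.

Hypothesis F_cont : {within `[0, lmax], continuous F}.
Hypothesis F_ge0 : forall x, x \in `[0, lmax] -> 0 <= F x.
Hypothesis d_gt0 : 0 < d.

Let dom1 : dom lmax 1.
Proof. by apply/domP; rewrite ler01 ltW. Qed.

Let tangent x : dom lmax x -> F x <= (F 1 - d) + d * x.
Proof. by move/concave_like_tangent; lra. Qed.

Lemma Fstar_concave_like : Fstar lmax F = (F 1)%:E.
Proof.
apply/le_anti/andP; split.
  rewrite -[F 1](subrK d); apply: (Fstar_le_line F_cont F_ge0 _ tangent).
  exact: ltW.
rewrite -(objective_dirac F_cont dom1).
exact/objective_le_Fstar/feasible_dirac.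
Qed.

Lemma dirac1_optimal : optimal lmax F \d_(1 : R).
Proof.
by split; [exact: feasible_dirac|rewrite objective_dirac // Fstar_concave_like].
Qed.

Lemma concave_like_optimal_dirac (mu : probability R R) :
  optimal lmax F mu -> mu [set 1] = 1%E.
Proof.
move=> [mu_feas obj_opt]; have [m mean m_le1] := feasible_mean mu_feas.
pose gap x := F 1 - d + d * x - F x.
have gap_ge0 x : dom lmax x -> 0 <= gap x by move/tangent; rewrite subr_ge0.
have := objective_add_gap F_cont F_ge0 mu_feas.1 mean tangent.
rewrite obj_opt Fstar_concave_like -/gap => gap_eq.
have int_gap : (\int[mu]_(x in dom lmax) (gap x)%:E = (d * (m - 1))%:E)%E.
  move: gap_eq; rewrite addeC => /(congr1 (fun z => z - (F 1)%:E)%E).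
  by rewrite addeK // => ->; rewrite -EFinB; congr EFin; ring.
have m1 : m = 1.
  apply/le_anti; rewrite m_le1 -subr_ge0 -(pmulr_rge0 _ d_gt0) -lee_fin -int_gap.
  by apply: integral_ge0 => x Dx; rewrite lee_fin gap_ge0.
have contact : \forall x \ae mu, dom lmax x -> F x = F 1 + d * (x - 1).
  have : \forall x \ae mu, dom lmax x -> gap x = 0.
    apply: ae_eq0_of_integral_eq0 => //.
    - apply: measurable_funB; last exact: measurable_F.
      by apply: measurable_funD => //; exact: measurable_funM.
    - exact: aeW.
    - by rewrite int_gap m1 subrr mulr0.
  by apply: filterS => x gap_x Dx; move: (gap_x Dx); rewrite /gap; lra.
have := concave_like_contact_one_sided contact.
by apply: probability_set1_of_mean mu_feas.1 _; rewrite mean m1.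
Qed.

End concave_like.

Section non_concave_like.
Context {R : realType} (lmax : R) (F : R -> R).
Hypothesis lmax_gt1 : 1 < lmax.
Hypothesis F_cont : {within `[0, lmax], continuous F}.
Hypothesis F_ge0 : forall x, x \in `[0, lmax] -> 0 <= F x.
Variable v : R.
Hypothesis Fstar_v : Fstar lmax F = v%:E.

Local Notation two_point_optimum :=
  (exists (x1 x2 p : R), [/\ x1 \in `]1, lmax], x2 \in `[0, 1[, 0 < p < 1 &
    exists mu : probability R R,
      [/\ mu [set x1] = p%:E, mu [set x2] = (1 - p)%:E & optimal lmax F mu]]).

Let lmax_ge0 : 0 <= lmax. Proof. by apply: ltW; apply: lt_trans lmax_gt1. Qed.

Lemma le_Fstar_slopes a b : dom lmax a -> dom lmax b -> a < 1 -> 1 < b ->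
  (F b - v) / (b - 1) <= (v - F a) / (1 - a).
Proof.
move=> Da Db a_lt1 b_gt1.
have /andP[p_gt0 p_lt1] := unit_mean_weight_itv a_lt1 b_gt1.
pose p : {i01 R} := Itv01 (ltW p_gt0) (ltW p_lt1).
have q_gt0 : 0 < (1 - a) * (b - 1) / (b - a) by apply: divr_gt0; nra.
rewrite -subr_le0 -(pmulr_rle0 _ q_gt0) -unit_mean_weight_slopes // subr_le0.
rewrite -lee_fin -Fstar_v -(objective_two_point F_cont F_ge0 p Db Da).
apply: objective_le_Fstar; apply: feasible_two_point => //=.
by rewrite unit_mean_weightE.
Qed.

Lemma two_point_optimal a b (p : R) : dom lmax a -> dom lmax b ->
  a < 1 -> 1 < b -> 0 < p < 1 -> p * b + (1 - p) * a = 1 ->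
  v <= p * F b + (1 - p) * F a -> two_point_optimum.
Proof.
move=> Da Db a_lt1 b_gt1 /andP[p_gt0 p_lt1] mean v_le.
have /domP/andP[a_ge0 _] := Da; have /domP/andP[_ b_le] := Db.
pose q : {i01 R} := Itv01 (ltW p_gt0) (ltW p_lt1).
have ba : b != a by rewrite gt_eqF //; lra.
exists b, a, p; split; rewrite ?in_itv /= ?a_ge0 ?a_lt1 ?b_gt1 ?b_le //.
  by rewrite p_gt0 p_lt1.
exists (two_point q b a); split.
- exact: two_point_set1l.
- exact: two_point_set1r.
- apply: feasible_optimal; first by apply: feasible_two_point => //=; rewrite mean.
  by rewrite Fstar_v objective_two_point.
Qed.

Lemma F_le_Fstar x : dom lmax x -> x <= 1 -> F x <= v.
Proof.
move=> Dx x_le1; rewrite -lee_fin -Fstar_v -(objective_dirac F_cont Dx).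
exact/objective_le_Fstar/feasible_dirac.
Qed.

Lemma non_concave_like_at_Fstar :
  F 1 = v -> ~ concave_like lmax F -> two_point_optimum.
Proof.
move=> F1v not_cl; apply: contrapT => no_opt; apply: not_cl.
move=> x1 x2 p Dx1 Dx2 x1_neq1 x2_neq1 /[dup] p01 /andP[p_gt0 p_lt1] mean.
rewrite ltNge F1v; apply/negP => v_le; apply: no_opt.
move: x1_neq1 x2_neq1; rewrite !neq_lt => /orP[x1_lt1|x1_gt1] /orP[x2_lt1|x2_gt1].
- by exfalso; nra.
- by apply: (two_point_optimal (p := 1 - p)) Dx1 Dx2 x1_lt1 x2_gt1 _ _ _; lra.
- exact: two_point_optimal Dx2 Dx1 x2_lt1 x1_gt1 p01 mean v_le.
- by exfalso; nra.
Qed.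

Section supporting_line.
Hypothesis F1_lt_v : F 1 < v.
Hypothesis F_lt_v : forall x, 0 <= x < 1 -> F x < v.

Let S := [set (F y - v) / (y - 1) | y in [set y | 1 < y <= lmax]].
Let s := sup S.

Let S_neq0 : S !=set0.
Proof. by exists ((F lmax - v) / (lmax - 1)), lmax; rewrite //= lexx andbT. Qed.

Let S_ubound : has_ubound S.
Proof.
have D0 : dom lmax 0 by apply/domP; rewrite lexx.
exists (v - F 0) => _ [y /andP[y_gt1 y_le] <-].
have := le_Fstar_slopes D0 _ ltr01 y_gt1; rewrite !subr0 divr1; apply.
by apply/domP; apply/andP; split => //; apply: le_trans (ltW y_gt1).
Qed.

Let line_above x : dom lmax x -> F x <= v + s * (x - 1).
Proof.
move=> /[dup] Dx /domP/andP[x_ge0 x_le].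
have [x_lt1|x_gt1|->] := ltgtP x 1; last by rewrite subrr mulr0 addr0; exact: ltW.
- have : s <= (v - F x) / (1 - x).
    apply: ge_sup => // _ [y /andP[y_gt1 y_le] <-]; apply: le_Fstar_slopes => //.
    by apply/domP/andP; split => //; apply: le_trans (ltW y_gt1).
  by rewrite ler_pdivlMr ?subr_gt0 //; lra.
- have : (F x - v) / (x - 1) <= s.
    by apply: ub_le_sup S_ubound _ _; exists x; rewrite //= x_gt1.
  by rewrite ler_pdivrMr ?subr_gt0 //; lra.
Qed.

Let contact_right : exists2 y, 1 < y <= lmax & F y = v + s * (y - 1).
Proof.
have [y] := EVT_min (ltW lmax_gt1)
  (continuous_gap (c := v - s) (k := s) F_cont ler01 (lexx lmax)).
rewrite in_itv => /= /andP[y_ge1 y_le] gap_min.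
have Dy : dom lmax y by apply/domP; rewrite y_le (le_trans ler01).
suff gap_y : v - s + s * y - F y = 0.
  exists y; last by lra.
  rewrite y_le andbT lt_neqAle y_ge1 andbT; apply/eqP => y1.
  by move: gap_y; rewrite -y1; have := F1_lt_v; lra.
have gap_ge0 : 0 <= v - s + s * y - F y by have := line_above Dy; lra.
apply/le_anti; rewrite gap_ge0 andbT leNgt; apply/negP => gap_pos.
pose k := (v - s + s * y - F y) / (lmax - 1).
have lmax1 : 0 < lmax - 1 by rewrite subr_gt0.
have k_gt0 : 0 < k by exact: divr_gt0.
have kE : k * (lmax - 1) = v - s + s * y - F y by rewrite /k mulfVK ?gt_eqF.
suff : s <= s - k by lra.
apply: ge_sup => // _ [z /andP[z_gt1 z_le] <-].
have := gap_min z; rewrite in_itv /= z_le (ltW z_gt1) => /(_ isT) gap_z.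
rewrite ler_pdivrMr ?subr_gt0 //; nra.
Qed.

Let contact_left : exists2 x, 0 <= x < 1 & F x = v + s * (x - 1).
Proof.
have [x] := EVT_min ler01
  (continuous_gap (c := v - s) (k := s) F_cont (lexx 0) (ltW lmax_gt1)).
rewrite in_itv => /= /andP[x_ge0 x_le1] gap_min.
have Dx : dom lmax x by apply/domP; rewrite x_ge0 (le_trans x_le1) // ltW.
suff gap_x : v - s + s * x - F x = 0.
  exists x; last by lra.
  rewrite x_ge0 lt_neqAle x_le1 andbT; apply/eqP => x1.
  by move: gap_x; rewrite x1; have := F1_lt_v; lra.
have gap_ge0 : 0 <= v - s + s * x - F x by have := line_above Dx; lra.
apply/le_anti; rewrite gap_ge0 andbT leNgt; apply/negP => gap_pos.
pose e := (v - s + s * x - F x) / 2.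
(* Weak duality needs a nonnegative slope, as only E[X] <= 1 is known. *)
pose b := Num.max (s + e) 0.
have b_ge0 : 0 <= b by rewrite le_max lexx orbT.
suff : (Fstar lmax F < (v - b + b)%:E)%E by rewrite Fstar_v subrK ltxx.
apply: (Fstar_lt_line F_cont F_ge0 lmax_ge0 b_ge0).
move=> z /[dup] Dz /domP/andP[z_ge0 z_le].
have line_z := line_above Dz; have [z_le1|z_gt1] := leP z 1.
- have := gap_min z; rewrite in_itv /= z_ge0 z_le1 => /(_ isT) gap_z.
  have [se_ge0|se_lt0] := leP 0 (s + e).
    by rewrite /b max_l //; rewrite /e in gap_z *; nra.
  rewrite /b max_r ?mul0r ?addr0 ?subr0; last exact: ltW.
  move: z_le1; rewrite le_eqVlt => /orP[/eqP->|z_lt1]; first exact: F1_lt_v.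
  by rewrite F_lt_v ?z_ge0.
- have : s + e <= b by rewrite le_max lexx.
  by rewrite /e; nra.
Qed.

Lemma supporting_line_two_point_optimal : two_point_optimum.
Proof.
have [y /andP[y_gt1 y_le] Fy] := contact_right.
have [x /andP[x_ge0 x_lt1] Fx] := contact_left.
have Dx : dom lmax x by apply/domP; rewrite x_ge0 (le_trans (ltW x_lt1)) // ltW.
have Dy : dom lmax y by apply/domP; rewrite y_le (le_trans ler01) // ltW.
have mean := unit_mean_weightE x_lt1 y_gt1.
set p := unit_mean_weight x y in mean.
have v_le : v <= p * F y + (1 - p) * F x.
  rewrite Fx Fy; suff -> : p * (v + s * (y - 1)) + (1 - p) * (v + s * (x - 1)) =
    v + s * (p * y + (1 - p) * x - 1) by rewrite mean subrr mulr0 addr0.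
  by ring.
have p01 := unit_mean_weight_itv x_lt1 y_gt1.
exact: two_point_optimal Dx Dy x_lt1 y_gt1 p01 mean v_le.
Qed.

End supporting_line.

Lemma non_concave_like_two_point_optimal :
  (forall x, 0 <= x < 1 -> F x < v) -> ~ concave_like lmax F -> two_point_optimum.
Proof.
move=> F_lt_v not_cl; have [F1_lt_v|F1_ge_v] := ltP (F 1) v.
  exact: supporting_line_two_point_optimal.
apply: non_concave_like_at_Fstar not_cl; apply/le_anti; rewrite F1_ge_v andbT.
by apply: F_le_Fstar => //; apply/domP; rewrite ler01 ltW.
Qed.

End non_concave_like.

Theorem proposition5p2 (R : realType) (lmax : R) (F : R -> R) :
  1 < lmax ->
  C1_on 0 lmax F ->
  (forall x, x \in `[0, lmax] -> 0 <= F x) ->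
  F 0 = 0 ->
  (forall x, x \in `[0, 1[ -> ((F x)%:E < Fstar lmax F)%E) ->
  0 < derive1 F 1 ->
  (concave_like lmax F ->
     (exists mu : probability R R, optimal lmax F mu) /\
     (forall mu : probability R R, optimal lmax F mu -> mu [set 1] = 1%E)) /\
  (~ concave_like lmax F ->
     exists (x1 x2 p : R), [/\ x1 \in `]1, lmax], x2 \in `[0, 1[, 0 < p < 1 &
       exists mu : probability R R,
         [/\ mu [set x1] = p%:E, mu [set x2] = (1 - p)%:E & optimal lmax F mu]]).
Proof.
move=> lmax_gt1 [F_cont [G [_ F_deriv]]] F_ge0 _ F_lt_Fstar F'1_gt0.
have F_deriv1 : is_derive (1 : R) 1 F (derive1 F 1).
  have /F_deriv G1 : (1 : R) \in `]0, lmax[ by rewrite in_itv /= ltr01.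
  by rewrite derive1E (@derive_val _ _ _ _ _ _ _ G1).
split=> [F_cl|].
  split; first by exists \d_(1 : R); exact: dirac1_optimal.
  by move=> mu; exact: concave_like_optimal_dirac.
have lmax_ge0 : 0 <= lmax by rewrite ltW // (lt_trans ltr01).
have Fstar_v := fineK (Fstar_fin_num F_cont F_ge0 lmax_ge0).
apply: (non_concave_like_two_point_optimal lmax_gt1 F_cont F_ge0 (esym Fstar_v)).
by move=> x x01; rewrite -lte_fin Fstar_v F_lt_Fstar // in_itv.
Qed.
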